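(* Let $\Bbbk$ be a field of characteristic $0$ and let $Q_1$ be the quiver with vertices $\{1,2\}$ and a single arrow $t:1\to2$. The zero double bracket is the unique $B$-linear double quasi-Poisson bracket on the path algebra $\Bbbk Q_1$, where $B=\Bbbk e_1\oplus\Bbbk e_2$.
   Context: The path algebra $\Bbbk Q_1$ is generated by $e_1,e_2,t$ with $e_ie_j=\delta_{ij}e_i$, $e_1+e_2=1$, $t=e_1te_2$. $\otimes=\otimes_\Bbbk$; Sweedler notation $d=d'\otimes d''$; outer structure $x(d'\otimes d'')y=xd'\otimes d''y$, inner structure $x*(d'\otimes d'')*y=d'y\otimes xd''$. A $B$-linear double bracket is a $\Bbbk$-bilinear map $A\times A\to A\otimes A$ vanishing when an argument lies in $B$, with $\{\!\{a,b\}\!\}=-\{\!\{b,a\}\!\}''\otimes\{\!\{b,a\}\!\}'$ and $\{\!\{a,bc\}\!\}=\{\!\{a,b\}\!\}c+b\{\!\{a,c\}\!\}$. Triple bracket: $\{\!\{a,b,c\}\!\}=\{\!\{a,\{\!\{b,c\}\!\}'\}\!\}\otimes\{\!\{b,c\}\!\}''+\tau\{\!\{b,\{\!\{c,a\}\!\}'\}\!\}\otimes\{\!\{c,a\}\!\}''+\tau^2\{\!\{c,\{\!\{a,b\}\!\}'\}\!\}\otimes\{\!\{a,b\}\!\}''$, $\tau(x_1\otimes x_2\otimes x_3)=x_3\otimes x_1\otimes x_2$. Quasi-Poisson: $\{\!\{a,b,c\}\!\}=\frac14\sum_{s=1,2}(ce_sa\otimes e_sb\otimes e_s-ce_sa\otimes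 e_s\otimes be_s-ce_s\otimes ae_sb\otimes e_s+ce_s\otimes ae_s\otimes be_s-e_sa\otimes e_sb\otimes e_sc+e_sa\otimes e_s\otimes be_sc+e_s\otimes ae_sb\otimes e_sc-e_s\otimes ae_s\otimes be_sc)$ for all $a,b,c$. *)

From HB Require Import structures.
From mathcomp Require Import all_boot all_algebra.
Set Implicit Arguments. Unset Strict Implicit. Unset Printing Implicit Defensive.
Import GRing.Theory.
Local Open Scope ring_scope.

(* The paths of the quiver Q_1 : vertices 1,2 (trivial paths e1, e2) and one
   arrow t : 1 -> 2.  These form a basis of the path algebra k Q_1. *)
Inductive Q1path := E1 | E2 | Tarr.

Definition p2o (p : Q1path) : 'I_3 :=
  match p with E1 => inord 0 | E2 => inord 1 | Tarr => inord 2 end.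
Definition o2p (i : 'I_3) : Q1path :=
  match val i with 0 => E1 | 1 => E2 | _ => Tarr end.
Lemma p2oK : cancel p2o o2p. Proof. by case; rewrite /o2p /= inordK. Qed.
HB.instance Definition _ := Countable.copy Q1path (can_type p2oK).
HB.instance Definition _ := Finite.copy Q1path (can_type p2oK).

(* Product of basis paths, following the conventions e_i e_j = delta_ij e_i,
   t = e1 t e2 (so e1 t = t, t e2 = t, all other products of t vanish). *)
Definition pmul (p q : Q1path) : option Q1path :=
  match p, q with
  | E1, E1 => Some E1
  | E2, E2 => Some E2
  | E1, Tarr => Some Tarr
  | Tarr, E2 => Some Tarr
  | _, _ => None
  end.

(* The path algebra k Q_1, as coordinate vectors on the path basis. *)
Notation pathalg k := {ffun Q1path -> k} (only parsing).
(* A (x) A and A (x) A (x) A, as coordinate arrays on the tensor bases. *)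
Notation tens2 k := {ffun Q1path * Q1path -> k} (only parsing).
Notation tens3 k := {ffun Q1path * Q1path * Q1path -> k} (only parsing).

Definition scl (k : fieldType) (T : finType) (c : k) (x : {ffun T -> k})
  : {ffun T -> k} := [ffun i => c * x i].
Notation "c *s x" := (scl c x) (at level 40).

Definition bas (k : fieldType) (p : Q1path) : pathalg k :=
  [ffun q => (q == p)%:R].

(* multiplication of k Q_1 (we do NOT use the pointwise ffun product) *)
Definition pmulv (k : fieldType) (p q : Q1path) : pathalg k :=
  match pmul p q with Some r => bas k r | None => 0 end.
Definition amul (k : fieldType) (x y : pathalg k) : pathalg k :=
  \sum_p \sum_q (x p * y q) *s pmulv k p q.

Definition tm2 (k : fieldType) (x y : pathalg k) : tens2 k :=
  [ffun pq => x pq.1 * y pq.2].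
Definition tm3 (k : fieldType) (x y z : pathalg k) : tens3 k :=
  [ffun r => x r.1.1 * y r.1.2 * z r.2].
Definition tm21 (k : fieldType) (d : tens2 k) (z : pathalg k) : tens3 k :=
  [ffun r => d r.1 * z r.2].

(* outer bimodule structure: x (d' (x) d'') y = x d' (x) d'' y *)
Definition lact2 (k : fieldType) (x : pathalg k) (d : tens2 k) : tens2 k :=
  \sum_p \sum_q d (p, q) *s tm2 (amul x (bas k p)) (bas k q).
Definition ract2 (k : fieldType) (d : tens2 k) (y : pathalg k) : tens2 k :=
  \sum_p \sum_q d (p, q) *s tm2 (bas k p) (amul (bas k q) y).

Definition swap2 (k : fieldType) (d : tens2 k) : tens2 k :=
  [ffun pq => d (pq.2, pq.1)].

Definition tau3 (k : fieldType) (X : tens3 k) : tens3 k :=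
  [ffun r => X (r.1.2, r.2, r.1.1)].

(* B = k e1 + k e2 *)
Definition inB (k : fieldType) (x : pathalg k) : Prop := x Tarr = 0.

Definition dbracket (k : fieldType) := pathalg k -> pathalg k -> tens2 k.

Definition is_double_bracket (k : fieldType) (br : dbracket k) : Prop :=
  [/\ (forall (c : k) x y z, br (c *s x + y) z = c *s br x z + br y z),
      (forall (c : k) x y z, br z (c *s x + y) = c *s br z x + br z y),
      (forall b x, inB b -> br b x = 0 /\ br x b = 0),
      (forall a b, br a b = - swap2 (br b a)) &
      (forall a b c, br a (amul b c) = ract2 (br a b) c + lact2 b (br a c))].

(* {{a, d'}} (x) d'' *)
Definition br_in1 (k : fieldType) (br : dbracket k) (a : pathalg k)
    (d : tens2 k) : tens3 k :=
  \sum_p \sum_q d (p, q) *s tm21 (br a (bas k p)) (bas k q).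

Definition triple_bracket (k : fieldType) (br : dbracket k) (a b c : pathalg k)
  : tens3 k :=
  br_in1 br a (br b c) + tau3 (br_in1 br b (br c a))
  + tau3 (tau3 (br_in1 br c (br a b))).

Definition qp_rhs (k : fieldType) (a b c : pathalg k) : tens3 k :=
  \sum_(s <- [:: E1; E2])
    let e := bas k s in
    (tm3 (amul (amul c e) a) (amul e b) e
     - tm3 (amul (amul c e) a) e (amul b e)
     - tm3 (amul c e) (amul (amul a e) b) e
     + tm3 (amul c e) (amul a e) (amul b e)
     - tm3 (amul e a) (amul e b) (amul e c)
     + tm3 (amul e a) e (amul (amul b e) c)
     + tm3 e (amul (amul a e) b) (amul e c)
     - tm3 e (amul a e) (amul (amul b e) c)).

Definition is_quasi_poisson (k : fieldType) (br : dbracket k) : Prop :=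
  forall a b c, triple_bracket br a b c = (4%:R)^-1 *s qp_rhs a b c.

Definition zero_bracket (k : fieldType) : dbracket k := fun _ _ => 0.
Arguments zero_bracket k _ _ : clear implicits.

(** The quasi-Poisson right-hand side vanishes identically on k Q_1: each of
    its eight terms is a pure tensor containing a factor [e_s], [e_s x] or
    [x e_s], and the few nonzero coordinates cancel in pairs.  Conversely, every B-linear double bracket
    vanishes, quasi-Poisson or not.  It is determined by [d := {{t, t}}], and
    from [t = e_1 t = t e_2] the Leibniz rule gives [d = e_1 d = d e_2] (outer
    actions), so [d] has no [e_2 (x) _] and no [_ (x) e_1] coordinates;
    skew-symmetry [d = - d'' (x) d'] then kills every coordinate except the
    one on [t (x) t], which satisfies [2 d_tt = 0]. *)
From HB Require Import structures.
From mathcomp Require Import all_boot all_algebra ring.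
Local Open Scope ring_scope.
Import GRing.Theory.

Definition eq_path (p q : Q1path) : bool :=
  match p, q with E1, E1 | E2, E2 | Tarr, Tarr => true | _, _ => false end.

Lemma eq_pathE p q : (p == q) = eq_path p q.
Proof. by case: p; case: q; rewrite /= ?eqxx //; apply/eqP. Qed.

Lemma big_Q1path (V : nmodType) (F : Q1path -> V) :
  \sum_p F p = F E1 + F E2 + F Tarr.
Proof.
rewrite (perm_big [:: E1; E2; Tarr]) /=; last first.
  apply: uniq_perm; first exact: index_enum_uniq.
    by rewrite /= !inE !eq_pathE.
  by move=> p; rewrite mem_index_enum !inE !eq_pathE; case: p.
by rewrite !big_cons big_nil addr0 addrA.
Qed.

Section PathAlgebra.
Variable k : fieldType.

Lemma basE p q : bas k p q = (eq_path q p)%:R.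
Proof. by rewrite ffunE eq_pathE. Qed.

Lemma amulE (x y : pathalg k) r : amul x y r =
  match r with
  | E1 => x E1 * y E1
  | E2 => x E2 * y E2
  | Tarr => x E1 * y Tarr + x Tarr * y E2
  end.
Proof.
rewrite /amul sum_ffunE big_Q1path !sum_ffunE !big_Q1path !ffunE /pmulv /=.
by case: r; rewrite !eq_pathE /=; ring.
Qed.

Lemma mul_e1_arrow : amul (bas k E1) (bas k Tarr) = bas k Tarr.
Proof. by apply/ffunP => r; rewrite amulE !basE; case: r => /=; ring. Qed.

Lemma mul_arrow_e2 : amul (bas k Tarr) (bas k E2) = bas k Tarr.
Proof. by apply/ffunP => r; rewrite amulE !basE; case: r => /=; ring. Qed.

Lemma lact2E x (d : tens2 k) p q :
  lact2 x d (p, q) = \sum_r d (r, q) * amul x (bas k r) p.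
Proof.
rewrite /lact2 sum_ffunE big_Q1path !sum_ffunE !big_Q1path !ffunE /= !eq_pathE.
by case: q => /=; ring.
Qed.

Lemma ract2E (d : tens2 k) y p q :
  ract2 d y (p, q) = \sum_r d (p, r) * amul (bas k r) y q.
Proof.
rewrite /ract2 sum_ffunE big_Q1path !sum_ffunE !big_Q1path !ffunE /= !eq_pathE.
by case: p => /=; ring.
Qed.

Lemma scl0 (T : finType) (c : k) : c *s (0 : {ffun T -> k}) = 0.
Proof. by apply/ffunP => i; rewrite !ffunE mulr0. Qed.

Lemma lact20 x : lact2 x (0 : tens2 k) = 0.
Proof.
apply/ffunP => -[p q]; rewrite lact2E ffunE big1 // => r _.
by rewrite ffunE mul0r.
Qed.

Lemma ract20 y : ract2 (0 : tens2 k) y = 0.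
Proof.
apply/ffunP => -[p q]; rewrite ract2E ffunE big1 // => r _.
by rewrite ffunE mul0r.
Qed.

Lemma tau30 : tau3 (0 : tens3 k) = 0.
Proof. by apply/ffunP => i; rewrite !ffunE. Qed.

Lemma br_in1_zero a d : br_in1 (zero_bracket k) a d = 0.
Proof.
apply/ffunP => i; rewrite !sum_ffunE big1 ?ffunE // => p _.
by rewrite sum_ffunE big1 // => q _; rewrite !ffunE mul0r mulr0.
Qed.

Lemma qp_rhs_eq0 (a b c : pathalg k) : qp_rhs a b c = 0.
Proof.
apply/ffunP => -[[p q] r]; rewrite /qp_rhs big_cons big_cons big_nil.
by case: p; case: q; case: r; rewrite !ffunE /= !amulE ?basE ?eq_pathE /=; ring.
Qed.

Lemma zero_bracket_double : is_double_bracket (zero_bracket k).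
Proof.
split=> //.
- by move=> *; rewrite scl0 addr0.
- by move=> *; rewrite scl0 addr0.
- by move=> a b; apply/ffunP => i; rewrite !ffunE oppr0.
- by move=> *; rewrite lact20 ract20 addr0.
Qed.

Lemma zero_bracket_quasi_poisson : is_quasi_poisson (zero_bracket k).
Proof.
move=> a b c.
by rewrite /triple_bracket !br_in1_zero !tau30 qp_rhs_eq0 scl0 !addr0.
Qed.

Lemma skew_tens2_eq0 (d : tens2 k) : (2%:R : k) != 0 ->
  d = - swap2 d -> (forall q, d (E2, q) = 0) -> (forall p, d (p, E1) = 0) ->
  d = 0.
Proof.
move=> two_neq0 skew_d d_E2 d_E1.
have d_swap p q : d (p, q) = - d (q, p) by rewrite {1}skew_d !ffunE.
have d_tt : d (Tarr, Tarr) = 0.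
  have : 2%:R * d (Tarr, Tarr) = 0 by rewrite mulr_natl mulr2n {1}d_swap addNr.
  by move/eqP; rewrite mulf_eq0 (negPf two_neq0) => /eqP.
apply/ffunP => -[p q]; rewrite ffunE.
by case: p; case: q; rewrite ?d_E2 ?d_E1 ?d_tt // d_swap ?d_E2 ?d_E1 oppr0.
Qed.

Section DoubleBracket.
Variable br : dbracket k.
Hypothesis br_double : is_double_bracket br.

Lemma dbracket_eq0 : br (bas k Tarr) (bas k Tarr) = 0 -> forall a b, br a b = 0.
Proof.
case: br_double => linl linr brB _ _ br_tt a b.
set t := bas k Tarr.
have split_arrow (x : pathalg k) : x = x Tarr *s t + (x - x Tarr *s t).
  by rewrite addrC subrK.
have inB_rest (x : pathalg k) : inB (x - x Tarr *s t).
  by rewrite /inB !ffunE eqxx mulr1 subrr.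
rewrite (split_arrow a) linl (proj1 (brB _ b (inB_rest a))) addr0.
by rewrite (split_arrow b) linr (proj2 (brB _ t (inB_rest b))) addr0 br_tt !scl0.
Qed.

Lemma dbracket_arrow_eq0 : (2%:R : k) != 0 -> br (bas k Tarr) (bas k Tarr) = 0.
Proof.
move=> two_neq0; case: br_double => _ _ brB skew leibniz.
have inB1 : inB (bas k E1) by rewrite /inB basE.
have inB2 : inB (bas k E2) by rewrite /inB basE.
have := leibniz (bas k Tarr) (bas k E1) (bas k Tarr).
rewrite mul_e1_arrow (proj2 (brB _ _ inB1)) ract20 add0r => d_left.
have := leibniz (bas k Tarr) (bas k Tarr) (bas k E2).
rewrite mul_arrow_e2 (proj2 (brB _ _ inB2)) lact20 addr0 => d_right.
apply: skew_tens2_eq0.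
- exact: two_neq0.
- exact: skew.
- move=> q; rewrite d_left lact2E big1 // => r _.
  by rewrite amulE basE mul0r mulr0.
- move=> p; rewrite d_right ract2E big1 // => r _.
  by rewrite amulE [bas k E2 E1]basE mulr0 mulr0.
Qed.

End DoubleBracket.
End PathAlgebra.

Theorem lemma4p3 (k : fieldType) (char0 : [pchar k] =i pred0) :
  (is_double_bracket (zero_bracket k) /\ is_quasi_poisson (zero_bracket k)) /\
  (forall br : dbracket k,
     is_double_bracket br -> is_quasi_poisson br ->
     forall a b : pathalg k, br a b = 0).
Proof.
split; first by split; [exact: zero_bracket_double | exact: zero_bracket_quasi_poisson].
move=> br br_double _; apply: dbracket_eq0 => //.
by apply: dbracket_arrow_eq0 => //; move/pcharf0P: char0 => ->.
Qed.
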